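(* (1) Every element of $(\mathfrak{d}_{\mathcal{I}})_4$ is nonreduced. (2) If $d = 8$ or $d = 14$, then every element of $(\mathfrak{d}_{\mathcal{I}})_d$ is reducible or nonreduced.
   Context: Let $\tau = (1+\sqrt5)/2$. Define $Z = \mathrm{diag}(-1,1,-1)$, $T = \begin{pmatrix}0&0&1\\1&0&0\\0&1&0\end{pmatrix}$, $P = \frac{1}{2}\begin{pmatrix}1&\tau^{-1}&-\tau\\ \tau^{-1}&\tau&1\\ \tau&-1&\tau^{-1}\end{pmatrix}$. The icosahedral group $\mathcal{I}$ is the subgroup of $\mathrm{PGL}(3,\mathbb{C})$ generated by $[Z],[T],[P]$, acting on $\mathbb P^2$ by $[A]\cdot(a:b:c) = [A(a,b,c)^t]$. $(\mathfrak{d}_{\mathcal I})_d$ denotes the linear system of plane curves of degree $d$ (nonzero effective divisors on $\mathbb{P}^2$) invariant under $\mathcal{I}$, i.e. $\sigma_*C = C$ for all $\sigma\in\mathcal{I}$. *)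

From HB Require Import structures.
From mathcomp Require Import all_boot all_order all_algebra.
From mathcomp Require Import reals.
From mathcomp Require Import complex.
From mathcomp Require Import mpoly.

Set Implicit Arguments.
Unset Strict Implicit.
Unset Printing Implicit Defensive.

Import Order.TTheory GRing.Theory Num.Theory.
Local Open Scope ring_scope.

(* The complex numbers are modelled as R[i] for an arbitrary realType R
   (all realTypes are isomorphic to the real numbers). *)

Section Icosahedral.
Variable R : realType.

Definition tau : R := (1 + Num.sqrt 5) / 2.

Definition mx_of_rows (rows : seq (seq R)) : 'M[R[i]]_3 :=
  \matrix_(i < 3, j < 3) ((nth 0 (nth [::] rows i) j)%:C)%C.

Definition icoZ : 'M[R[i]]_3 :=
  mx_of_rows [:: [:: -1; 0; 0]; [:: 0; 1; 0]; [:: 0; 0; -1]].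

Definition icoT : 'M[R[i]]_3 :=
  mx_of_rows [:: [:: 0; 0; 1]; [:: 1; 0; 0]; [:: 0; 1; 0]].

Definition icoP : 'M[R[i]]_3 :=
  mx_of_rows
    [:: [:: 1 / 2; tau^-1 / 2; - tau / 2];
        [:: tau^-1 / 2; tau / 2; 1 / 2];
        [:: tau / 2; - 1 / 2; tau^-1 / 2]].

Definition ico_gen (g : 'M[R[i]]_3) : Prop :=
  g = icoZ \/ g = icoT \/ g = icoP \/
  g = invmx icoZ \/ g = invmx icoT \/ g = invmx icoP.

Inductive ico_elt : 'M[R[i]]_3 -> Prop :=
  | ico_one : ico_elt 1%:M
  | ico_mul : forall g A, ico_gen g -> ico_elt A -> ico_elt (g *m A).

(* The linear substitution x |-> M x on C[x0,x1,x2]: for F, the polynomial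
   F \mPo lin_subst M is x |-> F(M x). *)
Definition lin_subst (M : 'M[R[i]]_3) : 3.-tuple {mpoly R[i][3]} :=
  [tuple \sum_(j < 3) M i j *: 'X_j | i < 3].

(* Push-forward of the curve {F = 0} by [A] is {F o A^-1 = 0};
   invariance means F o A^-1 is a nonzero scalar multiple of F. *)
Definition curve_invariant (A : 'M[R[i]]_3) (F : {mpoly R[i][3]}) : Prop :=
  exists c : R[i], c != 0 /\ F \mPo lin_subst (invmx A) = c *: F.

(* F defines an element of (d_I)_d : a nonzero effective divisor of degree d
   (a nonzero form of degree d, up to scalar) invariant under every element
   of the icosahedral group. *)
Definition in_ico_system (d : nat) (F : {mpoly R[i][3]}) : Prop :=
  F != 0 /\ F \is d.-homog /\ forall A, ico_elt A -> curve_invariant A F.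

Definition nonconstant (G : {mpoly R[i][3]}) : bool := (1 < msize G)%N.

(* The curve {F = 0} is nonreduced: some irreducible component appears with
   multiplicity >= 2, i.e. G^2 divides F for a nonconstant G. *)
Definition nonreduced (F : {mpoly R[i][3]}) : Prop :=
  exists G H : {mpoly R[i][3]}, nonconstant G /\ F = G * G * H.

Definition reducible (F : {mpoly R[i][3]}) : Prop :=
  exists G H : {mpoly R[i][3]}, nonconstant G /\ nonconstant H /\ F = G * H.

End Icosahedral.

(* A form F of an invariant curve satisfies F o g = chi(g) F for a character chi of the
   group; the relations Z^2 = T^3 = P^5 = (ZP)^3 = (TP)^5 = 1 force chi = 1.  Invariance
   under Z and T makes every monomial of F have even exponents and the coefficients
   invariant under cyclic permutation of the variables, so only a few unknowns remain; the
   identity F(Pv) = F(v) at a handful of integer points v gives linear equations over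
   Z[tau] between them.  Explicit combinations of these equations, checked by computation,
   force F = Q G with Q = x^2 + y^2 + z^2 the invariant conic, and in degree 4 also G = c Q.
   Hence quartic invariants are c Q^2, and invariants of degree 8 or 14 are reducible. *)

From HB Require Import structures.
From mathcomp Require Import all_boot all_order all_algebra.
From mathcomp Require Import reals complex mpoly ssrZ.
From mathcomp Require Import ring zify.
From Stdlib Require BinInt.

Set Implicit Arguments.
Unset Strict Implicit.
Unset Printing Implicit Defensive.

Import Order.TTheory GRing.Theory Num.Theory.
Local Open Scope ring_scope.

Declare Scope binZ_scope.
Delimit Scope binZ_scope with binZ.
Number Notation BinNums.Z BinInt.Z.of_num_int BinInt.Z.to_num_int : binZ_scope.

Notation Z := BinNums.Z.

(** * The ring Z[tau] and linear forms over it *)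

(* [(a, b)] stands for [a + b tau], where [tau ^+ 2 = tau + 1]. *)
Definition zgold := (Z * Z)%type.

Definition zg_of_Z (z : Z) : zgold := (z, 0).
Definition zg_add (x y : zgold) : zgold := (x.1 + y.1, x.2 + y.2).
Definition zg_opp (x : zgold) : zgold := (- x.1, - x.2).
Definition zg_mul (x y : zgold) : zgold :=
  (x.1 * y.1 + x.2 * y.2, x.1 * y.2 + x.2 * y.1 + x.2 * y.2).
Definition zg_exp (x : zgold) (n : nat) : zgold := iter n (zg_mul x) (zg_of_Z 1).

Section GoldenEval.
Variables (K : comNzRingType) (t : K).
Hypothesis t_golden : t ^+ 2 = t + 1.

Definition Z_eval (z : Z) : K := (int_of_Z z)%:~R.

Lemma Z_evalD a b : Z_eval (a + b) = Z_eval a + Z_eval b.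
Proof. by rewrite /Z_eval !rmorphD. Qed.

Lemma Z_evalN a : Z_eval (- a) = - Z_eval a.
Proof. by rewrite /Z_eval !rmorphN. Qed.

Lemma Z_evalM a b : Z_eval (a * b) = Z_eval a * Z_eval b.
Proof. by rewrite /Z_eval !rmorphM. Qed.

Definition zg_eval (x : zgold) : K := Z_eval x.1 + Z_eval x.2 * t.

Lemma zg_eval_Z z : zg_eval (zg_of_Z z) = Z_eval z.
Proof. by rewrite /zg_eval /Z_eval rmorph0 mul0r addr0. Qed.

Lemma zg_evalD x y : zg_eval (zg_add x y) = zg_eval x + zg_eval y.
Proof. rewrite /zg_eval /= !Z_evalD; ring. Qed.

Lemma zg_evalN x : zg_eval (zg_opp x) = - zg_eval x.
Proof. rewrite /zg_eval /= !Z_evalN; ring. Qed.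

Lemma zg_evalM x y : zg_eval (zg_mul x y) = zg_eval x * zg_eval y.
Proof.
rewrite /zg_eval /= !(Z_evalD, Z_evalM).
move: (Z_eval x.1) (Z_eval x.2) (Z_eval y.1) (Z_eval y.2) => a b c e.
transitivity (a * c + b * e * t ^+ 2 + (a * e + b * c) * t); last by ring.
by rewrite t_golden; ring.
Qed.

Lemma zg_evalX x n : zg_eval (zg_exp x n) = zg_eval x ^+ n.
Proof.
elim: n => [|n IHn]; first by rewrite zg_eval_Z /Z_eval.
by rewrite /zg_exp iterS zg_evalM -/(zg_exp x n) IHn exprS.
Qed.
End GoldenEval.

(* [[:: c_0; c_1; ...]] stands for the linear form [c_0 a_0 + c_1 a_1 + ...]. *)
Definition lform := seq zgold.

Fixpoint lf_add (l1 l2 : lform) : lform :=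
  match l1, l2 with
  | [::], _ => l2
  | _, [::] => l1
  | c1 :: l1', c2 :: l2' => zg_add c1 c2 :: lf_add l1' l2'
  end.
Definition lf_scale (c : zgold) (l : lform) : lform := map (zg_mul c) l.
Definition lf_sub (l1 l2 : lform) : lform := lf_add l1 (map zg_opp l2).
Definition lf_unit (j : nat) (c : zgold) : lform := ncons j (zg_of_Z 0) [:: c].
Definition lf_comb (u : seq zgold) (ls : seq lform) : lform :=
  foldr (fun cl acc => lf_add (lf_scale cl.1 cl.2) acc) [::] (zip u ls).
Definition lf_sum (ls : seq lform) : lform := foldr lf_add [::] ls.
Definition lf_eq0 (l : lform) : bool := all (pred1 (zg_of_Z 0)) l.

Section LinearForms.
Variables (K : comNzRingType) (t : K).
Hypothesis t_golden : t ^+ 2 = t + 1.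
Local Notation zg_eval := (zg_eval t).

Fixpoint lf_eval (l : lform) (a : nat -> K) : K :=
  if l is c :: l' then zg_eval c * a 0%N + lf_eval l' (a \o succn) else 0.

Lemma lf_evalD l1 l2 a : lf_eval (lf_add l1 l2) a = lf_eval l1 a + lf_eval l2 a.
Proof.
elim: l1 l2 a => [|c1 l1 IHl] [|c2 l2] a /=; rewrite ?add0r ?addr0 //.
by rewrite IHl zg_evalD; ring.
Qed.

Lemma lf_evalZ c l a : lf_eval (lf_scale c l) a = zg_eval c * lf_eval l a.
Proof. by elim: l a => [|c' l IHl] a /=; rewrite ?mulr0 // IHl (zg_evalM t_golden); ring. Qed.

Lemma lf_evalB l1 l2 a : lf_eval (lf_sub l1 l2) a = lf_eval l1 a - lf_eval l2 a.
Proof.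
rewrite lf_evalD; congr (_ + _).
by elim: l2 a => [|c l IHl] a /=; rewrite ?oppr0 // IHl zg_evalN; ring.
Qed.

Lemma lf_eval_unit j c a : lf_eval (lf_unit j c) a = zg_eval c * a j.
Proof.
by elim: j a => [|j IHj] a /=; rewrite ?addr0 // IHj zg_eval_Z /Z_eval mul0r add0r.
Qed.

Lemma lf_eval_eq0 l a : lf_eq0 l -> lf_eval l a = 0.
Proof.
elim: l a => [|c l IHl] a //= /andP[/eqP-> /IHl->].
by rewrite zg_eval_Z /Z_eval mul0r addr0.
Qed.

Lemma lf_eval_comb u ls a :
  (forall l, l \in ls -> lf_eval l a = 0) -> lf_eval (lf_comb u ls) a = 0.
Proof.
elim: u ls => [|c u IHu] [|l ls] //= ls0.
rewrite lf_evalD lf_evalZ ls0 ?mem_head // mulr0 add0r IHu // => l' l'_ls.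
by apply: ls0; rewrite in_cons l'_ls orbT.
Qed.

Lemma lf_eval_sum ls a : lf_eval (lf_sum ls) a = \sum_(l <- ls) lf_eval l a.
Proof. by elim: ls => [|l ls IHl]; rewrite ?big_nil ?big_cons //= lf_evalD IHl. Qed.
End LinearForms.

Lemma lf_eval_cert (K : numDomainType) (t : K) (u : seq zgold) (ls : seq lform) (c : Z)
    (l : lform) (a : nat -> K) :
  t ^+ 2 = t + 1 -> (forall l', l' \in ls -> lf_eval t l' a = 0) -> c != 0 ->
  lf_eq0 (lf_sub (lf_comb u ls) (lf_scale (zg_of_Z c) l)) -> lf_eval t l a = 0.
Proof.
move=> t_golden ls0 c0 /(lf_eval_eq0 t a).
rewrite lf_evalB lf_eval_comb // (lf_evalZ t_golden) sub0r zg_eval_Z => /eqP.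
rewrite oppr_eq0 mulf_eq0 /Z_eval intr_eq0 => /orP[/eqP cZ0|/eqP //].
by move: c0; rewrite -(int_of_ZK c) cZ0.
Qed.

Lemma big_seq_delta (K : nmodType) (T : eqType) (s : seq T) (n : T) (c : T -> K) :
  uniq s -> \sum_(t <- s) (if t == n then c t else 0) = if n \in s then c n else 0.
Proof.
elim: s => [|x s IHs]; first by rewrite big_nil.
rewrite big_cons in_cons => /andP[x_s s_uniq]; rewrite IHs //.
have [<-|] := eqVneq x n; first by rewrite (negbTE x_s) addr0.
by rewrite add0r.
Qed.

Definition triple := (nat * nat * nat)%type.
Definition tdeg (t : triple) : nat := (t.1.1 + t.1.2 + t.2)%N.

Definition i0 : 'I_3 := @Ordinal 3 0 isT.
Definition i1 : 'I_3 := @Ordinal 3 1 isT.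
Definition i2 : 'I_3 := @Ordinal 3 2 isT.

Lemma ord3P (P : 'I_3 -> Prop) : P i0 -> P i1 -> P i2 -> forall i, P i.
Proof.
move=> P0 P1 P2 [[|[|[|//]]] lt_i3]; [rewrite (_ : Ordinal lt_i3 = i0) |
  rewrite (_ : Ordinal lt_i3 = i1) | rewrite (_ : Ordinal lt_i3 = i2)]; by [|apply: val_inj].
Qed.

Lemma sum_ord3 (K : nmodType) (f : 'I_3 -> K) : \sum_(i < 3) f i = f i0 + f i1 + f i2.
Proof. by rewrite !big_ord_recr big_ord0 /= add0r; congr (_ + _ + _); congr f; apply: val_inj. Qed.

Lemma prod_ord3 (K : comNzRingType) (f : 'I_3 -> K) :
  \prod_(i < 3) f i = f i0 * f i1 * f i2.
Proof. by rewrite !big_ord_recr big_ord0 /= mul1r; congr (_ * _ * _); congr f; apply: val_inj. Qed.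

Definition mono3 (t : triple) : 'X_{1..3} := [multinom [tuple t.1.1; t.1.2; t.2]].

Lemma mono3_eta (m : 'X_{1..3}) : m = mono3 (m i0, m i1, m i2).
Proof. by apply/mnmP; apply: ord3P. Qed.

Lemma mono3_inj : injective mono3.
Proof.
move=> [[a b] c] [[a' b'] c'] /(congr1 (fun m : 'X_{1..3} => (m i0, m i1, m i2))).
by case=> eq_a eq_b eq_c; congr (_, _, _).
Qed.

Lemma mdeg_mono3 t : mdeg (mono3 t) = tdeg t.
Proof. by rewrite mdegE sum_ord3. Qed.

Definition triples (d : nat) : seq triple :=
  [seq (a, b, d - a - b)%N | a <- iota 0 d.+1, b <- iota 0 (d - a).+1].

Lemma mem_triples d t : (t \in triples d) = (tdeg t == d).
Proof.
case: t => [[a b] c]; rewrite /tdeg /=.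
apply/allpairsPdep/eqP => [[a' [b' [+ + [-> -> ->]]]]|<-].
  by rewrite !mem_iota !add0n !ltnS; lia.
by exists a, b; rewrite !mem_iota !add0n !ltnS; split; [lia|lia|congr (_, _, _); lia].
Qed.

Lemma triples_uniq d : uniq (triples d).
Proof.
apply: allpairs_uniq_dep => [||[a b] [a' b'] _ _ /= [-> ->]] //; first exact: iota_uniq.
by move=> *; apply: iota_uniq.
Qed.

Section TernaryForms.
Variable K : comNzRingType.

Definition poly3 (s : seq triple) (c : triple -> K) : {mpoly K[3]} :=
  \sum_(t <- s) c t *: 'X_[mono3 t].

Lemma mcoeff_poly3 s c n : uniq s -> (poly3 s c)@_(mono3 n) = if n \in s then c n else 0.
Proof.
move=> s_uniq; rewrite -big_seq_delta // /poly3 raddf_sum /=; apply: eq_bigr => t _.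
by rewrite mcoeffZ mcoeffX (inj_eq mono3_inj) mulr_natr mulrb.
Qed.

Lemma poly3_homog d c : poly3 (triples d) c \is d.-homog.
Proof.
rewrite /poly3 big_seq; apply: rpred_sum => t; rewrite mem_triples => /eqP t_d.
by rewrite dhomogZ // dhomogX /= mdeg_mono3 t_d.
Qed.

Lemma homog_poly3E d (F : {mpoly K[3]}) :
  F \is d.-homog -> F = poly3 (triples d) (fun t => F@_(mono3 t)).
Proof.
move=> F_d; apply/mpolyP => m; rewrite (mono3_eta m) mcoeff_poly3 ?triples_uniq //.
case: ifP => // /negbT; rewrite mem_triples => deg_m.
by apply: (dhomog_nemf_coeff F_d); rewrite /= mdeg_mono3.
Qed.

Lemma meval_poly3 s c (u : 'I_3 -> K) :
  (poly3 s c).@[u] = \sum_(t <- s) c t * (u i0 ^+ t.1.1 * u i1 ^+ t.1.2 * u i2 ^+ t.2).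
Proof.
by rewrite rmorph_sum /=; apply: eq_bigr => t _; rewrite mevalZ mevalX prod_ord3.
Qed.
End TernaryForms.

(** * Multiples of the invariant conic *)

Definition incr2 (i : nat) (t : triple) : triple :=
  let: (a, b, c) := t in
  match i with 0 => (a.+2, b, c) | 1 => (a, b.+2, c) | _ => (a, b, c.+2) end%N.

Definition decr2 (i : nat) (t : triple) : option triple :=
  let: (a, b, c) := t in
  match i with
  | 0 => if (1 < a)%N then Some (a - 2, b, c) else None
  | 1 => if (1 < b)%N then Some (a, b - 2, c) else None
  | _ => if (1 < c)%N then Some (a, b, c - 2) else None
  end%N.

Lemma decr2_eqE i n t : (decr2 i n == Some t) = (incr2 i t == n).
Proof.
case: n t => [[a b] c] [[a' b'] c']; apply/eqP/eqP => [|<-]; case: i => [|[|i]] //=.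
- by case: ifP => // lt1a [<- <- <-]; congr (_, _, _); lia.
- by case: ifP => // lt1b [<- <- <-]; congr (_, _, _); lia.
- by case: ifP => // lt1c [<- <- <-]; congr (_, _, _); lia.
all: by rewrite subn2.
Qed.

Lemma tdeg_incr2 i t : tdeg (incr2 i t) = (tdeg t).+2.
Proof. by case: t => [[a b] c]; case: i => [|[|i]]; rewrite /tdeg /=; lia. Qed.

Section DivisionByQ.
Variable K : comNzRingType.

Definition Qform : {mpoly K[3]} := \sum_(i < 3) 'X_i ^+ 2.

Lemma X2_mono3 (i : 'I_3) t :
  'X_i ^+ 2 * 'X_[mono3 t] = 'X_[mono3 (incr2 i t)] :> {mpoly K[3]}.
Proof.
rewrite expr2 -!mpolyXD; congr 'X_[_]; apply/mnmP; apply: ord3P;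
  by case: t => [[a b] c]; move: i; apply: ord3P; rewrite !mnmE.
Qed.

Definition Q_coef (g : triple -> K) (n : triple) : K := \sum_(i < 3) oapp g 0 (decr2 i n).

Lemma mcoeff_X2_poly3 (i : 'I_3) s (g : triple -> K) n : uniq s ->
  ('X_i ^+ 2 * poly3 s g)@_(mono3 n) =
  if decr2 i n is Some t then (if t \in s then g t else 0) else 0.
Proof.
move=> s_uniq; rewrite /poly3 mulr_sumr raddf_sum /=.
under eq_bigr => t _ do
  rewrite -scalerAr X2_mono3 mcoeffZ mcoeffX (inj_eq mono3_inj) -decr2_eqE mulr_natr mulrb.
case: (decr2 i n) => [t|]; last by rewrite big1.
by rewrite -big_seq_delta //; apply: eq_bigr => t' _; rewrite eq_sym.
Qed.

Lemma Qform_mul_poly3 d (F : {mpoly K[3]}) (g : triple -> K) : F \is d.+2.-homog ->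
  (forall n, tdeg n = d.+2 -> F@_(mono3 n) = Q_coef g n) ->
  F = Qform * poly3 (triples d) g.
Proof.
move=> F_homog F_coef; apply/mpolyP => m; rewrite (mono3_eta m); set n := (_, _, _).
rewrite /Qform mulr_suml raddf_sum /=.
under eq_bigr => i _ do rewrite mcoeff_X2_poly3 ?triples_uniq //.
have [deg_n|deg_n] := eqVneq (tdeg n) d.+2.
  rewrite F_coef //; apply: eq_bigr => i _.
  case E: (decr2 i n) => [t|] //=; move/eqP: E; rewrite decr2_eqE => /eqP E.
  by rewrite mem_triples -2!eqSS -(tdeg_incr2 i) E deg_n eqxx.
have -> : F@_(mono3 n) = 0 by apply: (dhomog_nemf_coeff F_homog); rewrite /= mdeg_mono3.
symmetry; apply: big1 => i _.
case E: (decr2 i n) => [t|] //; move/eqP: E; rewrite decr2_eqE => /eqP E.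
by rewrite mem_triples -2!eqSS -(tdeg_incr2 i) E (negbTE deg_n).
Qed.

Lemma X2_incr2 (i : 'I_3) : 'X_i ^+ 2 = 'X_[mono3 (incr2 i (0, 0, 0))] :> {mpoly K[3]}.
Proof.
rewrite -X2_mono3 (_ : mono3 _ = 0%MM) ?mpolyX0 ?mulr1 //.
by apply/mnmP; apply: ord3P; rewrite mnmE.
Qed.

Lemma Qform_homog : Qform \is 2.-homog.
Proof.
by apply: rpred_sum; apply: ord3P => _; rewrite X2_incr2 dhomogX /= mdeg_mono3.
Qed.

Lemma Qform_neq0 : Qform != 0.
Proof.
apply/eqP => /(congr1 (mcoeff (mono3 (2, 0, 0)))).
rewrite mcoeff0 /Qform raddf_sum /= sum_ord3 !X2_incr2 !mcoeffX !(inj_eq mono3_inj) /=.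
by rewrite !addr0 => /eqP; rewrite oner_eq0.
Qed.
End DivisionByQ.

Arguments Qform {K}.

Lemma comp_mpoly_comp (K : comNzRingType) (n : nat) (F : {mpoly K[n]})
    (lq lr : n.-tuple {mpoly K[n]}) :
  (F \mPo lq) \mPo lr = F \mPo [tuple tnth lq i \mPo lr | i < n].
Proof.
rewrite [F \mPo lq]comp_mpolyEX [F \mPo _]comp_mpolyEX raddf_sum /=.
apply: eq_bigr => m _; rewrite comp_mpolyZ !comp_mpolyX rmorph_prod /=.
by congr (_ *: _); apply: eq_bigr => i _; rewrite rmorphXn tnth_mktuple.
Qed.

Lemma mcoeff_comp_monomial (K : comNzRingType) (n : nat) (F : {mpoly K[n]}) lq
    (h : 'X_{1..n} -> 'X_{1..n}) (w : 'X_{1..n} -> K) :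
  injective h -> (forall m, 'X_[m] \mPo lq = w m *: 'X_[h m]) ->
  forall m, (F \mPo lq)@_(h m) = w m * F@_m.
Proof.
move=> h_inj lqX m; rewrite comp_mpolyEX raddf_sum /=.
under eq_bigr => m' _ do rewrite lqX scalerA mcoeffZ mcoeffX (inj_eq h_inj) mulr_natr mulrb.
rewrite big_seq_delta ?msupp_uniq // mcoeff_msupp mulrC.
by case: eqP => [->|]; rewrite ?mulr0.
Qed.

Section Substitution.
Variable R : realType.
Local Notation C := R[i].

Definition mx_comp (F : {mpoly C[3]}) (M : 'M[C]_3) : {mpoly C[3]} :=
  F \mPo lin_subst (R := R) M.

Lemma tnth_lin_subst M i : tnth (lin_subst (R := R) M) i = \sum_(j < 3) M i j *: 'X_j.
Proof. exact: tnth_mktuple. Qed.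

Lemma mx_comp_mul F M N : mx_comp F (M *m N) = mx_comp (mx_comp F M) N.
Proof.
rewrite /mx_comp comp_mpoly_comp; congr (F \mPo _); apply: eq_from_tnth => i.
rewrite tnth_lin_subst tnth_mktuple tnth_lin_subst raddf_sum /=; symmetry.
under eq_bigr => j _ do
  rewrite comp_mpolyZ comp_mpolyXU -tnth_nth tnth_lin_subst scaler_sumr.
rewrite exchange_big /=; apply: eq_bigr => k _.
by rewrite mxE scaler_suml; apply: eq_bigr => j _; rewrite scalerA.
Qed.

Lemma mx_comp1 F : mx_comp F 1%:M = F.
Proof.
rewrite /mx_comp -[RHS]comp_mpoly_id; congr (F \mPo _); apply: eq_from_tnth => i.
rewrite tnth_lin_subst tnth_mktuple (bigD1 i) //= big1 ?addr0 => [|j ji].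
  by rewrite mxE eqxx scale1r.
by rewrite mxE eq_sym (negbTE ji) scale0r.
Qed.

Lemma mx_compZ c F M : mx_comp (c *: F) M = c *: mx_comp F M.
Proof. exact: comp_mpolyZ. Qed.

Lemma meval_mx_comp F M (u : 'I_3 -> C) :
  (mx_comp F M).@[u] = F.@[fun i => \sum_(j < 3) M i j * u j].
Proof.
rewrite comp_mpoly_meval; apply: meval_eq => i.
by rewrite tnth_lin_subst rmorph_sum /=; apply: eq_bigr => j _; rewrite mevalZ mevalXU.
Qed.

Lemma mx_compX F M c : mx_comp F M = c *: F -> forall k, mx_comp F (M ^+ k) = c ^+ k *: F.
Proof.
move=> FM; elim=> [|k IHk]; first by rewrite expr0 scale1r mx_comp1.
by rewrite exprS -mulmxE mx_comp_mul FM mx_compZ IHk scalerA -exprS.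
Qed.

Lemma mx_comp_mul_eigen F M N a b : mx_comp F M = a *: F -> mx_comp F N = b *: F ->
  mx_comp F (M *m N) = (a * b) *: F.
Proof. by move=> FM FN; rewrite mx_comp_mul FM mx_compZ FN scalerA mulrC. Qed.

Lemma mx_comp_eigen_unity F M c k : F != 0 -> mx_comp F M = c *: F -> M ^+ k = 1 -> c ^+ k = 1.
Proof.
move=> F0 FM Mk1; apply/eqP; rewrite -subr_eq0.
have /eqP : (c ^+ k - 1) *: F = 0 by rewrite scalerBl -(mx_compX FM) Mk1 mx_comp1 scale1r subrr.
by rewrite scaler_eq0 (negbTE F0) orbF.
Qed.
End Substitution.

(** * The icosahedral generators *)

(* 3 x 3 matrices over Z[tau], as lists of rows. *)
Definition gmx := seq (seq zgold).

Definition gmx_entry (A : gmx) (i j : nat) : zgold := nth (zg_of_Z 0) (nth [::] A i) j.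
Definition gmx_scalar (c : zgold) : gmx :=
  [seq [seq if i == j then c else zg_of_Z 0 | j <- iota 0 3] | i <- iota 0 3].
Definition gmx_mul (A B : gmx) : gmx :=
  [seq [seq foldr zg_add (zg_of_Z 0)
              [seq zg_mul (gmx_entry A i k) (gmx_entry B k j) | k <- iota 0 3]
         | j <- iota 0 3] | i <- iota 0 3].
Definition gmx_exp (A : gmx) (k : nat) : gmx := iter k (gmx_mul A) (gmx_scalar (zg_of_Z 1)).

Section GoldenMatrices.
Variables (K : comNzRingType) (t : K).
Hypothesis t_golden : t ^+ 2 = t + 1.
Local Notation zg_eval := (zg_eval t).

Definition gmx_eval (A : gmx) : 'M[K]_3 := \matrix_(i, j) zg_eval (gmx_entry A i j).

Lemma gmx_eval_scalar c : gmx_eval (gmx_scalar c) = (zg_eval c)%:M.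
Proof.
by apply/matrixP; apply: ord3P; apply: ord3P; rewrite !mxE /gmx_entry /= ?zg_eval_Z.
Qed.

Lemma gmx_eval_mul A B : gmx_eval (gmx_mul A B) = gmx_eval A *m gmx_eval B.
Proof.
apply/matrixP => i j; rewrite !mxE sum_ord3 !mxE /gmx_entry.
rewrite (nth_map 0%N) ?size_iota // (nth_map 0%N) ?size_iota // !nth_iota // !add0n /=.
by rewrite !zg_evalD !(zg_evalM t_golden) zg_eval_Z /Z_eval addr0 addrA.
Qed.

Lemma gmx_evalX A k : gmx_eval (gmx_exp A k) = gmx_eval A ^+ k.
Proof.
elim: k => [|k IHk]; first by rewrite gmx_eval_scalar zg_eval_Z /Z_eval.
by rewrite /gmx_exp iterS gmx_eval_mul -/(gmx_exp A k) IHk exprS mulmxE.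
Qed.

Lemma gmx_exp_scalar (a : K) A k s : gmx_exp A k = gmx_scalar (zg_of_Z s) ->
  a ^+ k * Z_eval K s = 1 -> (a *: gmx_eval A) ^+ k = 1.
Proof.
by move=> Ak ak1; rewrite exprZn -gmx_evalX Ak gmx_eval_scalar zg_eval_Z scale_scalar_mx ak1.
Qed.
End GoldenMatrices.

Lemma trivial_character (K : comNzRingType) (z t p : K) :
  z ^+ 2 = 1 -> t ^+ 3 = 1 -> p ^+ 5 = 1 -> (z * p) ^+ 3 = 1 -> (t * p) ^+ 5 = 1 ->
  [/\ z = 1, t = 1 & p = 1].
Proof.
move=> z2 t3 p5 zp3 tp5.
have z3 : z ^+ 3 = z by rewrite exprS z2 mulr1.
have zp3' : z * p ^+ 3 = 1 by rewrite -[in LHS]z3 -exprMn.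
have p1 : p = 1.
  transitivity ((z * p ^+ 3) ^+ 2); last by rewrite zp3' expr1n.
  by rewrite exprMn z2 mul1r -exprM (_ : (3 * 2 = 5 + 1)%N) // exprD p5 mul1r.
have t5 : t ^+ 5 = 1 by rewrite -tp5 p1 mulr1.
split=> //; first by rewrite -zp3' p1 expr1n mulr1.
by rewrite -[t]mul1r -t5 -exprSr (_ : 6 = 3 * 2)%N // exprM t3 expr1n.
Qed.

Definition Zgmx : gmx := [:: [:: (-1, 0); (0, 0); (0, 0)];
                            [:: (0, 0); (1, 0); (0, 0)];
                            [:: (0, 0); (0, 0); (-1, 0)]]%binZ.
Definition Tgmx : gmx := [:: [:: (0, 0); (0, 0); (1, 0)];
                            [:: (1, 0); (0, 0); (0, 0)];
                            [:: (0, 0); (1, 0); (0, 0)]]%binZ.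
(* Twice the matrix [P], using [tau^-1 = tau - 1]. *)
Definition P2gmx : gmx := [:: [:: (1, 0); (-1, 1); (0, -1)];
                             [:: (-1, 1); (0, 1); (1, 0)];
                             [:: (0, 1); (-1, 0); (-1, 1)]]%binZ.

Section IcosahedralGenerators.
Variable R : realType.
Local Notation C := R[i].

Lemma tau_golden : tau R ^+ 2 = tau R + 1.
Proof.
have sqrt5 : Num.sqrt (5 : R) ^+ 2 = 5 by rewrite sqr_sqrtr // ler0n.
rewrite /tau; move: sqrt5; set s := Num.sqrt 5 => sqrt5.
have -> : ((1 + s) / 2) ^+ 2 = (1 + 2 * s + s ^+ 2) / 4 by field; rewrite ?pnatr_eq0.
by rewrite sqrt5; field; rewrite ?pnatr_eq0.
Qed.

Lemma tauV : (tau R)^-1 = tau R - 1.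
Proof.
have tau0 : tau R != 0.
  apply/eqP => tau0; move: tau_golden.
  by rewrite tau0 expr2 mul0r add0r => /eqP; rewrite eq_sym oner_eq0.
by apply: (mulfI tau0); rewrite mulfV // mulrBr mulr1 -expr2 tau_golden addrAC subrr add0r.
Qed.

Definition tauC : C := (tau R)%:C%C.

Lemma tauC_golden : tauC ^+ 2 = tauC + 1.
Proof. by rewrite -rmorphXn tau_golden rmorphD rmorph1. Qed.

Local Notation geval := (gmx_eval tauC).

Lemma icoZE : icoZ R = geval Zgmx.
Proof.
apply/matrixP; apply: ord3P; apply: ord3P;
  by rewrite !mxE /= /zg_eval /= ?(rmorph0, rmorph1, rmorphN) ?mul0r ?addr0.
Qed.

Lemma icoTE : icoT R = geval Tgmx.
Proof.
apply/matrixP; apply: ord3P; apply: ord3P;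
  by rewrite !mxE /= /zg_eval /= ?(rmorph0, rmorph1) ?mul0r ?addr0.
Qed.

Lemma icoPE : icoP R = 2^-1 *: geval P2gmx.
Proof.
apply/matrixP; apply: ord3P; apply: ord3P;
  rewrite !mxE /= /zg_eval /= mulrC rmorphM fmorphV rmorph_nat;
  by rewrite ?tauV ?(rmorphB, rmorphN, rmorph1) ?mul0r ?mul1r ?mulN1r ?addr0 ?add0r // addrC.
Qed.

Lemma half_exp_cancel k : (2^-1 : C) ^+ k * (2 ^ k)%N%:R = 1.
Proof. by rewrite natrX -exprMn mulVf ?pnatr_eq0 // expr1n. Qed.

Lemma icoZ_order : icoZ R ^+ 2 = 1.
Proof.
rewrite icoZE -[geval _]scale1r; apply: (@gmx_exp_scalar _ _ tauC_golden _ _ _ 1%binZ).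
  by vm_compute.
by rewrite expr1n mul1r.
Qed.

Lemma icoT_order : icoT R ^+ 3 = 1.
Proof.
rewrite icoTE -[geval _]scale1r; apply: (@gmx_exp_scalar _ _ tauC_golden _ _ _ 1%binZ).
  by vm_compute.
by rewrite expr1n mul1r.
Qed.

Lemma icoP_order : icoP R ^+ 5 = 1.
Proof.
rewrite icoPE; apply: (@gmx_exp_scalar _ _ tauC_golden _ _ _ 32%binZ); first by vm_compute.
exact: (half_exp_cancel 5).
Qed.

Lemma icoZP_order : (icoZ R *m icoP R) ^+ 3 = 1.
Proof.
rewrite icoZE icoPE -scalemxAr -(gmx_eval_mul tauC_golden).
apply: (@gmx_exp_scalar _ _ tauC_golden _ _ _ 8%binZ); first by vm_compute.
exact: (half_exp_cancel 3).
Qed.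

Lemma icoTP_order : (icoT R *m icoP R) ^+ 5 = 1.
Proof.
rewrite icoTE icoPE -scalemxAr -(gmx_eval_mul tauC_golden).
apply: (@gmx_exp_scalar _ _ tauC_golden _ _ _ 32%binZ); first by vm_compute.
exact: (half_exp_cancel 5).
Qed.
End IcosahedralGenerators.

(** * Consequences of invariance *)

Definition mnm_rot (m : 'X_{1..3}) : 'X_{1..3} := mono3 (m i1, m i2, m i0).

Lemma mnm_rot_inj : injective mnm_rot.
Proof.
by move=> m m' /mono3_inj [eq1 eq2 eq0]; rewrite (mono3_eta m) (mono3_eta m') eq0 eq1 eq2.
Qed.

Section Invariance.
Variable R : realType.
Local Notation C := R[i].

Lemma ico_gen_invariant (F : {mpoly C[3]}) M :
  (forall A, ico_elt A -> curve_invariant A F) -> ico_gen (invmx M) ->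
  exists c, mx_comp F M = c *: F.
Proof.
move=> F_inv /ico_mul/(_ (ico_one R))/F_inv.
by rewrite /curve_invariant mulmx1 invmxK => -[c [_ FM]]; exists c.
Qed.

Lemma ico_generators_invariant (F : {mpoly C[3]}) : F != 0 ->
  (forall A, ico_elt A -> curve_invariant A F) ->
  [/\ mx_comp F (icoZ R) = F, mx_comp F (icoT R) = F & mx_comp F (icoP R) = F].
Proof.
move=> F0 F_inv.
have [cZ FZ] : exists c, mx_comp F (icoZ R) = c *: F.
  by apply: (ico_gen_invariant F_inv); rewrite /ico_gen; do 3 right; left.
have [cT FT] : exists c, mx_comp F (icoT R) = c *: F.
  by apply: (ico_gen_invariant F_inv); rewrite /ico_gen; do 4 right; left.
have [cP FP] : exists c, mx_comp F (icoP R) = c *: F.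
  by apply: (ico_gen_invariant F_inv); rewrite /ico_gen; do 5 right.
have [] := trivial_character (mx_comp_eigen_unity F0 FZ (icoZ_order R))
  (mx_comp_eigen_unity F0 FT (icoT_order R)) (mx_comp_eigen_unity F0 FP (icoP_order R))
  (mx_comp_eigen_unity F0 (mx_comp_mul_eigen FZ FP) (icoZP_order R))
  (mx_comp_eigen_unity F0 (mx_comp_mul_eigen FT FP) (icoTP_order R)).
by move=> cZ1 cT1 cP1; rewrite FZ FT FP cZ1 cT1 cP1 !scale1r.
Qed.

Let complex0 : (0 : R)%:C%C = 0 :> C. Proof. exact: rmorph0. Qed.
Let complex1 : (1 : R)%:C%C = 1 :> C. Proof. exact: rmorph1. Qed.
Let complexN1 : (-1 : R)%:C%C = -1 :> C. Proof. by rewrite rmorphN rmorph1. Qed.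

Lemma icoZ_monomial m :
  'X_[m] \mPo lin_subst (icoZ R) = (-1 : C) ^+ (m i0 + m i2) *: 'X_[m].
Proof.
rewrite comp_mpolyX prod_ord3 !tnth_lin_subst !sum_ord3 !mxE /=.
rewrite complex0 complex1 complexN1 !scale0r !add0r !addr0 scale1r.
rewrite [in RHS]mpolyXE_id prod_ord3 !exprZn -!scalerAl -!scalerAr scalerA exprD.
(* [done] would try to unify distinct monomials by computing them. *)
reflexivity.
Qed.

Lemma icoT_monomial m :
  'X_[m] \mPo lin_subst (icoT R) = 1 *: 'X_[mnm_rot m] :> {mpoly C[3]}.
Proof.
rewrite comp_mpolyX prod_ord3 !tnth_lin_subst !sum_ord3 !mxE /=.
rewrite complex0 complex1 !scale0r !add0r !addr0 !scale1r.
rewrite [in RHS]mpolyXE_id prod_ord3 -[LHS]mulrA [LHS]mulrC.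
reflexivity.
Qed.
End Invariance.

Definition triple_rot (t : triple) : triple := (t.1.2, t.2, t.1.1).
Definition triple_lex (t u : triple) : bool :=
  (t.1.1 < u.1.1)%N ||
  (t.1.1 == u.1.1) && ((t.1.2 < u.1.2)%N || (t.1.2 == u.1.2) && (t.2 <= u.2)%N).
Definition orbit_rep (t : triple) : triple :=
  let r1 := triple_rot t in let r2 := triple_rot r1 in
  if triple_lex t r1 && triple_lex t r2 then t else if triple_lex r1 r2 then r1 else r2.
Definition all_even (t : triple) : bool := ~~ odd t.1.1 && ~~ odd t.1.2 && ~~ odd t.2.

(* The unknowns of degree [d] are the coefficients at the triples of [orbit_reps d]. *)
Definition orbit_reps (d : nat) : seq triple :=
  undup [seq orbit_rep t | t <- triples d & all_even t].
Definition unknown_index (d : nat) (t : triple) : nat := index (orbit_rep t) (orbit_reps d).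

Lemma orbit_rep_in_orbit t :
  orbit_rep t \in [:: t; triple_rot t; triple_rot (triple_rot t)].
Proof. by rewrite /orbit_rep; do 2?case: ifP => _; rewrite !inE eqxx ?orbT. Qed.

Lemma orbit_rep_mem d t : t \in triples d -> all_even t -> orbit_rep t \in orbit_reps d.
Proof. by move=> t_d t_even; rewrite mem_undup; apply: map_f; rewrite mem_filter t_even. Qed.

Section CoefficientSymmetry.
Variable R : realType.
Local Notation C := R[i].
Variable F : {mpoly C[3]}.
Hypothesis FZ : mx_comp F (icoZ R) = F.
Hypothesis FT : mx_comp F (icoT R) = F.

Definition coef3 (t : triple) : C := F@_(mono3 t).

Lemma coef3_triple_rot t : coef3 (triple_rot t) = coef3 t.
Proof.
have := mcoeff_comp_monomial F mnm_rot_inj (@icoT_monomial R) (mono3 t).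
by rewrite -/(mx_comp _ _) FT mul1r; case: t => [[a b] c].
Qed.

Lemma coef3_orbit_rep t : coef3 (orbit_rep t) = coef3 t.
Proof.
by have := orbit_rep_in_orbit t; rewrite !inE => /or3P[] /eqP->; rewrite ?coef3_triple_rot.
Qed.

Lemma coef3_odd t : odd (t.1.1 + t.2) -> coef3 t = 0.
Proof.
move=> t_odd; have := mcoeff_comp_monomial F (h := id) (fun _ _ => id) (@icoZ_monomial R) (mono3 t).
rewrite -/(mx_comp _ _) FZ /coef3; case: t t_odd => [[a b] c] /= t_odd.
by rewrite -signr_odd t_odd expr1 mulN1r => /eqP; rewrite -addr_eq0 -mulr2n mulrn_eq0 => /eqP.
Qed.

Lemma coef3_not_all_even t : ~~ odd (tdeg t) -> ~~ all_even t -> coef3 t = 0.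
Proof.
case: t => [[a b] c]; rewrite /tdeg /all_even /= => deg_even.
have parity : odd a (+) odd b (+) odd c = false by rewrite -!oddD (negbTE deg_even).
case/nandP => [/nandP[]|] /negbNE odd_t.
- rewrite -2!coef3_triple_rot coef3_odd //= oddD.
  by move: parity; rewrite odd_t; case: (odd b); case: (odd c).
- rewrite coef3_odd //= oddD.
  by move: parity; rewrite odd_t; case: (odd a); case: (odd c).
- rewrite -coef3_triple_rot coef3_odd //= oddD.
  by move: parity; rewrite odd_t; case: (odd a); case: (odd b).
Qed.

Definition unknown (d j : nat) : C := coef3 (nth (0, 0, 0)%N (orbit_reps d) j).

Lemma coef3E d t : ~~ odd d -> t \in triples d ->
  coef3 t = if all_even t then unknown d (unknown_index d t) else 0.
Proof.
move=> d_even t_d; case: ifP => t_even.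
  by rewrite /unknown nth_index ?orbit_rep_mem // coef3_orbit_rep.
by apply: coef3_not_all_even; rewrite ?t_even //; move: t_d; rewrite mem_triples => /eqP->.
Qed.
End CoefficientSymmetry.

(** * The equations F(Pv) = F(v) *)

Definition gpt_coord (v : seq zgold) (i : nat) : zgold := nth (zg_of_Z 0) v i.
Definition gmx_apply (A : gmx) (v : seq zgold) : seq zgold :=
  [seq foldr zg_add (zg_of_Z 0) [seq zg_mul (gmx_entry A i k) (gpt_coord v k) | k <- iota 0 3]
  | i <- iota 0 3].
Definition zg_monomial (v : seq zgold) (t : triple) : zgold :=
  zg_mul (zg_mul (zg_exp (gpt_coord v 0) t.1.1) (zg_exp (gpt_coord v 1) t.1.2))
         (zg_exp (gpt_coord v 2) t.2).

Section GoldenPoints.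
Variables (K : comNzRingType) (t : K).
Hypothesis t_golden : t ^+ 2 = t + 1.

Definition gpt_eval (v : seq zgold) (i : 'I_3) : K := zg_eval t (gpt_coord v i).

Lemma gmx_apply_eval A v i :
  \sum_(j < 3) gmx_eval t A i j * gpt_eval v j = gpt_eval (gmx_apply A v) i.
Proof.
rewrite sum_ord3 !mxE /gpt_eval /gpt_coord (nth_map 0%N) ?size_iota // nth_iota // add0n /=.
by rewrite !zg_evalD !(zg_evalM t_golden) zg_eval_Z /Z_eval addr0 addrA.
Qed.

Lemma zg_monomial_eval v (n : triple) : zg_eval t (zg_monomial v n) =
  gpt_eval v i0 ^+ n.1.1 * gpt_eval v i1 ^+ n.1.2 * gpt_eval v i2 ^+ n.2.
Proof. by rewrite !(zg_evalM t_golden) !(zg_evalX t_golden). Qed.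
End GoldenPoints.

Definition coef_form (d : nat) (t : triple) : lform :=
  if all_even t then lf_unit (unknown_index d t) (zg_of_Z 1) else [::].

(* [F (P v) = F v], multiplied by [2 ^ d] and written in the unknowns of degree [d]. *)
Definition P_equation (d : nat) (v : seq zgold) : lform :=
  lf_sum [seq lf_scale (zg_add (zg_monomial (gmx_apply P2gmx v) t)
                               (zg_opp (zg_mul (zg_exp (zg_of_Z 2) d) (zg_monomial v t))))
                       (coef_form d t) | t <- triples d].

Section PEquation.
Variable R : realType.
Local Notation C := R[i].
Local Notation tauC := (tauC R).
Local Notation tauC_golden := (tauC_golden R).

Lemma coef_form_eval (F : {mpoly C[3]}) d t :
  mx_comp F (icoZ R) = F -> mx_comp F (icoT R) = F -> ~~ odd d -> t \in triples d ->
  lf_eval tauC (coef_form d t) (unknown F d) = F@_(mono3 t).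
Proof.
move=> FZ FT d_even t_d; rewrite -/(coef3 F t) (coef3E FZ FT d_even t_d) /coef_form.
by case: ifP => // _; rewrite lf_eval_unit zg_eval_Z mul1r.
Qed.

Lemma icoP_apply v i :
  \sum_(j < 3) icoP R i j * gpt_eval tauC v j = 2^-1 * gpt_eval tauC (gmx_apply P2gmx v) i.
Proof.
rewrite -(gmx_apply_eval tauC_golden) mulr_sumr; apply: eq_bigr => j _.
by rewrite icoPE mxE mulrA.
Qed.

Lemma P_equation_eval (F : {mpoly C[3]}) d v :
  F \is d.-homog -> ~~ odd d ->
  mx_comp F (icoZ R) = F -> mx_comp F (icoT R) = F -> mx_comp F (icoP R) = F ->
  lf_eval tauC (P_equation d v) (unknown F d) = 0.
Proof.
move=> F_homog d_even FZ FT FP.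
set u := gpt_eval tauC v; set w := gpt_eval tauC (gmx_apply P2gmx v).
pose mon (x : 'I_3 -> C) (n : triple) := x i0 ^+ n.1.1 * x i1 ^+ n.1.2 * x i2 ^+ n.2.
have FPv : \sum_(n <- triples d) F@_(mono3 n) * mon w n =
    2 ^+ d * \sum_(n <- triples d) F@_(mono3 n) * mon u n.
  have := meval_mx_comp F (icoP R) u; rewrite FP (meval_eq _ (icoP_apply v)).
  rewrite {1 2}(homog_poly3E F_homog) !meval_poly3 => ->.
  rewrite mulr_sumr big_seq [RHS]big_seq; apply: eq_bigr => n; rewrite mem_triples => /eqP n_d.
  have half_d : (2 : C) ^+ d * 2^-1 ^+ tdeg n = 1.
    by rewrite n_d -exprMn divff ?pnatr_eq0 // expr1n.
  rewrite !exprMn; transitivity (F@_(mono3 n) * mon w n * (2 ^+ d * 2^-1 ^+ tdeg n)).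
    by rewrite half_d mulr1.
  by rewrite /mon /tdeg !exprD; ring.
rewrite /P_equation lf_eval_sum big_map big_seq.
under eq_bigr => n n_d do rewrite (lf_evalZ tauC_golden) (coef_form_eval FZ FT d_even n_d).
rewrite -big_seq.
under eq_bigr => n _ do rewrite zg_evalD zg_evalN (zg_evalM tauC_golden (zg_exp _ _))
  !(zg_monomial_eval tauC_golden) (zg_evalX tauC_golden) zg_eval_Z.
rewrite -/u -/w (_ : Z_eval _ 2 = 2) //.
rewrite (eq_bigr (fun n => F@_(mono3 n) * mon w n - 2 ^+ d * (F@_(mono3 n) * mon u n))).
  by rewrite sumrB -mulr_sumr FPv subrr.
by move=> n _; rewrite /mon; ring.
Qed.
End PEquation.

(** * Certificates *)

Definition Q_lform (L : triple -> lform) (n : triple) : lform :=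
  lf_sum [seq oapp L [::] (decr2 i n) | i <- iota 0 3].

Lemma Q_lform_eval (K : comNzRingType) (t : K) L n a :
  lf_eval t (Q_lform L n) a = Q_coef (fun s => lf_eval t (L s) a) n.
Proof.
rewrite lf_eval_sum big_map -[iota 0 3]/(index_iota 0 3) big_mkord.
by apply: eq_bigr => i _; case: (decr2 i n).
Qed.

Definition quotient_form (Ls : seq lform) (d : nat) (t : triple) : lform :=
  nth [::] Ls (index t (triples d)).

(* [Ls] lists, in the order of [triples d], the coefficients of the quotient [F / Qform] as
   forms in the unknowns.  For each [n] of degree [d + 2], the entry of [cs] at the index of
   [n] in [triples (d + 2)] is a nonzero [c] together with a combination [u] of the
   P-equations at the points [pts] that equals [c] times the relation [F_n = Q_coef g n]. *)
Definition Q_divisible_cert (d : nat) (pts : seq (seq Z)) (Ls : seq lform)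
    (cs : seq (Z * lform)) : bool :=
  let eqs := [seq P_equation d.+2 (map zg_of_Z v) | v <- pts] in
  all (fun n => let: (c, u) := nth (1%binZ, [::]) cs (index n (triples d.+2)) in
         (c != 0) && lf_eq0 (lf_sub (lf_comb u eqs) (lf_scale (zg_of_Z c)
           (lf_sub (coef_form d.+2 n) (Q_lform (quotient_form Ls d) n)))))
    (triples d.+2).

Definition Q_multiple_cert (Ls : seq lform) : bool :=
  all (fun n => lf_eq0 (lf_sub (quotient_form Ls 2 n)
                               (Q_lform (fun=> quotient_form Ls 2 (2, 0, 0)%N) n)))
      (triples 2).

Section Certificates.
Variable R : realType.
Local Notation C := R[i].
Local Notation tauC := (tauC R).
Local Notation tauC_golden := (tauC_golden R).

Lemma Q_divisible_cert_sound (F : {mpoly C[3]}) d pts Ls cs :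
  ~~ odd d -> F \is d.+2.-homog ->
  mx_comp F (icoZ R) = F -> mx_comp F (icoT R) = F -> mx_comp F (icoP R) = F ->
  Q_divisible_cert d pts Ls cs ->
  F = Qform * poly3 (triples d) (fun t => lf_eval tauC (quotient_form Ls d t) (unknown F d.+2)).
Proof.
move=> d_even F_homog FZ FT FP /allP cert; apply: (Qform_mul_poly3 F_homog) => n deg_n.
have d2_even : ~~ odd d.+2 by rewrite /= negbK.
have n_d : n \in triples d.+2 by rewrite mem_triples deg_n.
move: (cert n n_d); case: nth => c u /andP[c0 /(lf_eval_cert tauC_golden) rel].
have /rel : forall l, l \in [seq P_equation d.+2 (map zg_of_Z v) | v <- pts] ->
    lf_eval tauC l (unknown F d.+2) = 0.
  by move=> _ /mapP[v _ ->]; exact: P_equation_eval F_homog d2_even FZ FT FP.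
move=> /(_ c0)/eqP; rewrite lf_evalB subr_eq0 => /eqP.
by rewrite (coef_form_eval FZ FT d2_even n_d) Q_lform_eval.
Qed.

Lemma Q_multiple_cert_sound Ls (a : nat -> C) : Q_multiple_cert Ls ->
  poly3 (triples 2) (fun t => lf_eval tauC (quotient_form Ls 2 t) a) =
  Qform * poly3 (triples 0) (fun=> lf_eval tauC (quotient_form Ls 2 (2, 0, 0)%N) a).
Proof.
move=> /allP cert; apply: Qform_mul_poly3 (poly3_homog _ _) _ => n deg_n.
have n_2 : n \in triples 2 by rewrite mem_triples deg_n.
rewrite mcoeff_poly3 ?triples_uniq // n_2 -Q_lform_eval; apply/eqP.
by rewrite -subr_eq0 -lf_evalB; apply/eqP/lf_eval_eq0/cert.
Qed.
End Certificates.

(* Computed offline; only their validity, checked below, matters. *)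
Definition points4 : seq (seq Z) := [:: [:: 1; 0; 0]]%binZ.

Definition quotients4 : seq lform := [:: [:: (0, 0); (1, 0)]; [::]; [:: (0, 0); (1, 0)]; [::];
  [::]; [:: (0, 0); (1, 0)]]%binZ.

Definition cert4 : seq (Z * lform) := [:: (1, [::]); (1, [::]); (4, [:: (1, 0)]); (1, [::]);
  (1, [::]); (1, [::]); (1, [::]); (1, [::]); (1, [::]); (4, [:: (1, 0)]); (1, [::]);
  (4, [:: (1, 0)]); (1, [::]); (1, [::]); (1, [::])]%binZ.

Definition points8 : seq (seq Z) := [:: [:: 1; 0; 0]; [:: 1; 1; 0]; [:: 0; 1; 1]]%binZ.

Definition quotients8 : seq lform := [:: [:: (0, 0); (0, 0); (0, 0); (0, 0); (1, 0)]; [::];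
  [:: (0, 0); (0, 0); (0, 0); (-1, -1); (7, 4)]; [::];
  [:: (0, 0); (0, 0); (0, 0); (1, 0); (-1, 0)]; [::];
  [:: (0, 0); (0, 0); (0, 0); (0, 0); (1, 0)]; [::]; [::]; [::]; [::]; [::]; [::];
  [:: (0, 0); (0, 0); (0, 0); (1, 0); (-1, 0)]; [::];
  [:: (0, 0); (0, 0); (0, 0); (0, 4); (6, -16)]; [::];
  [:: (0, 0); (0, 0); (0, 0); (-1, -1); (7, 4)]; [::]; [::]; [::]; [::];
  [:: (0, 0); (0, 0); (0, 0); (-1, -1); (7, 4)]; [::];
  [:: (0, 0); (0, 0); (0, 0); (1, 0); (-1, 0)]; [::]; [::];
  [:: (0, 0); (0, 0); (0, 0); (0, 0); (1, 0)]]%binZ.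

Definition cert8 : seq (Z * lform) := [:: (1, [::]); (1, [::]);
  (1280, [:: (120, 60); (-14, -7); (10, 5)]); (1, [::]);
  (1280, [:: (-40, 60); (6, -7); (-10, 5)]); (1, [::]); (1, [::]); (1, [::]); (1, [::]);
  (1, [::]); (1, [::]); (1, [::]); (1, [::]); (1, [::]); (1, [::]); (1, [::]); (1, [::]);
  (1, [::]); (1, [::]); (1280, [:: (-20, -180); (37, 21); (-15, -15)]); (1, [::]);
  (1280, [:: (-20, -180); (37, 21); (-15, -15)]); (1, [::]);
  (1280, [:: (120, 60); (-14, -7); (10, 5)]); (1, [::]); (1, [::]); (1, [::]); (1, [::]);
  (1, [::]); (1, [::]); (1280, [:: (-40, 60); (6, -7); (-10, 5)]); (1, [::]);
  (1280, [:: (-20, -180); (37, 21); (-15, -15)]); (1, [::]);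
  (1280, [:: (-40, 60); (6, -7); (-10, 5)]); (1, [::]); (1, [::]); (1, [::]); (1, [::]);
  (1280, [:: (120, 60); (-14, -7); (10, 5)]); (1, [::]); (1, [::]); (1, [::]); (1, [::]);
  (1, [::])]%binZ.

Definition points14 : seq (seq Z) := [:: [:: 1; 0; 0]; [:: 1; 1; 0]; [:: 0; 1; 1]; [:: 1; 1; 1];
  [:: 1; 2; 0]; [:: 2; 1; 0]; [:: 1; 2; 3]; [:: 0; 2; 1]]%binZ.

Definition quotients14 : seq lform := [:: [:: (0, 0); (0, 0); (0, 0); (0, 0); (0, 0); (0, 0); (0, 0); (0, 0); (0, 0); (0, 0); (0, 0); (1, 0)];
  [::];
  [:: (0, 0); (0, 0); (0, 0); (0, 0); (0, 0); (0, 0); (0, 0); (0, 0); (0, 0); (1, 0); (0, 0); (-1, 0)];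
  [::];
  [:: (0, 0); (0, 0); (0, 0); (0, 0); (0, 0); (0, 0); (0, 0); (0, 0); (2, 3); (1, 4); (0, 2); (-34, -105)];
  [::];
  [:: (0, 0); (0, 0); (0, 0); (0, 0); (0, 0); (0, 0); (0, 0); (0, 0); (-2, -2); (0, -1); (3, -3); (41, 70)];
  [::];
  [:: (0, 0); (0, 0); (0, 0); (0, 0); (0, 0); (0, 0); (0, 0); (0, 0); (1, 0); (0, 0); (-1, 0); (1, 0)];
  [::];
  [:: (0, 0); (0, 0); (0, 0); (0, 0); (0, 0); (0, 0); (0, 0); (0, 0); (0, 0); (0, 0); (1, 0); (-1, 0)];
  [::];
  [:: (0, 0); (0, 0); (0, 0); (0, 0); (0, 0); (0, 0); (0, 0); (0, 0); (0, 0); (0, 0); (0, 0); (1, 0)];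
  [::]; [::]; [::]; [::]; [::]; [::]; [::]; [::]; [::]; [::]; [::]; [::];
  [:: (0, 0); (0, 0); (0, 0); (0, 0); (0, 0); (0, 0); (0, 0); (0, 0); (0, 0); (0, 0); (1, 0); (-1, 0)];
  [::];
  [:: (0, 0); (0, 0); (0, 0); (0, 0); (0, 0); (0, 0); (0, 0); (0, 0); (-2, -2); (-7, 0); (-3, -4); (142, 70)];
  [::];
  [:: (0, 0); (0, 0); (0, 0); (0, 0); (0, 0); (0, 0); (0, 0); (0, 0); (-6, -16); (-9, -7); (-15, 8); (354, 329)];
  [::];
  [:: (0, 0); (0, 0); (0, 0); (0, 0); (0, 0); (0, 0); (0, 0); (0, 0); (4, 14); (13, 0); (16, -5); (-227, -259)];
  [::];
  [:: (0, 0); (0, 0); (0, 0); (0, 0); (0, 0); (0, 0); (0, 0); (0, 0); (-2, -2); (-7, 0); (-3, -4); (142, 70)];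
  [::];
  [:: (0, 0); (0, 0); (0, 0); (0, 0); (0, 0); (0, 0); (0, 0); (0, 0); (0, 0); (1, 0); (0, 0); (-1, 0)];
  [::]; [::]; [::]; [::]; [::]; [::]; [::]; [::]; [::]; [::];
  [:: (0, 0); (0, 0); (0, 0); (0, 0); (0, 0); (0, 0); (0, 0); (0, 0); (1, 0); (0, 0); (-1, 0); (1, 0)];
  [::];
  [:: (0, 0); (0, 0); (0, 0); (0, 0); (0, 0); (0, 0); (0, 0); (0, 0); (4, 14); (13, 0); (16, -5); (-227, -259)];
  [::];
  [:: (0, 0); (0, 0); (0, 0); (0, 0); (0, 0); (0, 0); (0, 0); (0, 0); (10, 10); (30, -5); (5, 25); (-365, -350)];
  [::];
  [:: (0, 0); (0, 0); (0, 0); (0, 0); (0, 0); (0, 0); (0, 0); (0, 0); (-6, -16); (-9, -7); (-15, 8); (354, 329)];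
  [::];
  [:: (0, 0); (0, 0); (0, 0); (0, 0); (0, 0); (0, 0); (0, 0); (0, 0); (2, 3); (1, 4); (0, 2); (-34, -105)];
  [::]; [::]; [::]; [::]; [::]; [::]; [::]; [::];
  [:: (0, 0); (0, 0); (0, 0); (0, 0); (0, 0); (0, 0); (0, 0); (0, 0); (-2, -2); (0, -1); (3, -3); (41, 70)];
  [::];
  [:: (0, 0); (0, 0); (0, 0); (0, 0); (0, 0); (0, 0); (0, 0); (0, 0); (-6, -16); (-9, -7); (-15, 8); (354, 329)];
  [::];
  [:: (0, 0); (0, 0); (0, 0); (0, 0); (0, 0); (0, 0); (0, 0); (0, 0); (4, 14); (13, 0); (16, -5); (-227, -259)];
  [::];
  [:: (0, 0); (0, 0); (0, 0); (0, 0); (0, 0); (0, 0); (0, 0); (0, 0); (-2, -2); (0, -1); (3, -3); (41, 70)];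
  [::]; [::]; [::]; [::]; [::]; [::];
  [:: (0, 0); (0, 0); (0, 0); (0, 0); (0, 0); (0, 0); (0, 0); (0, 0); (2, 3); (1, 4); (0, 2); (-34, -105)];
  [::];
  [:: (0, 0); (0, 0); (0, 0); (0, 0); (0, 0); (0, 0); (0, 0); (0, 0); (-2, -2); (-7, 0); (-3, -4); (142, 70)];
  [::];
  [:: (0, 0); (0, 0); (0, 0); (0, 0); (0, 0); (0, 0); (0, 0); (0, 0); (1, 0); (0, 0); (-1, 0); (1, 0)];
  [::]; [::]; [::]; [::];
  [:: (0, 0); (0, 0); (0, 0); (0, 0); (0, 0); (0, 0); (0, 0); (0, 0); (0, 0); (1, 0); (0, 0); (-1, 0)];
  [::];
  [:: (0, 0); (0, 0); (0, 0); (0, 0); (0, 0); (0, 0); (0, 0); (0, 0); (0, 0); (0, 0); (1, 0); (-1, 0)];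
  [::]; [::];
  [:: (0, 0); (0, 0); (0, 0); (0, 0); (0, 0); (0, 0); (0, 0); (0, 0); (0, 0); (0, 0); (0, 0); (1, 0)]]%binZ.

Definition cert14 : seq (Z * lform) := [:: (1, [::]); (1, [::]); (1, [::]); (1, [::]);
  (1512530110505779200, [:: (141437984303242440, 197370074032864920); (-3896905612298622, -6580139331287346); (4003411726811728, 6366862178737104); (-937678426627833, -1492856625296619); (-8489352257792, -12911367263208); (-32146499491112, -49684878087792); (-11709641550, -19242324450); (25554116854464, 39931155727584)]);
  (1, [::]);
  (79606847921356800, [:: (-3239007019730460, -667528643629980); (17065818970728, 68634677700864); (-51080288956532, -50645452627616); (9682673736852, 12919607779401); (119543384200, 99039768688); (477147406978, 339447262018); (85603500, 184938000); (-346886149614, -273929925510)]);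
  (1, [::]);
  (1512530110505779200, [:: (17249657108981220, -27159812406555840); (482839652971434, 323139854998752); (-68401606648056, -534815646285668); (46457412118191, 104077915292448); (99959995752, 1160079415840); (-410266438626, 4714393116424); (1051036050, 1130309700); (49494677190, -3990281369784)]);
  (1, [::]); (1, [::]); (1, [::]); (1, [::]); (1, [::]); (1, [::]); (1, [::]); (1, [::]);
  (1, [::]); (1, [::]); (1, [::]); (1, [::]); (1, [::]); (1, [::]); (1, [::]); (1, [::]);
  (1, [::]); (1, [::]); (1, [::]); (1, [::]); (1, [::]); (1, [::]);
  (7562650552528896000, [:: (-670271874799269600, -329885335451687400); (9193437246769380, 20296357093803120); (-8762941504580120, -19414484616035080); (2483569030165695, 3978824063841630); (24697250869024, 37751656240352); (99747370714792, 123728251193756); (29381831100, 55891435800); (-70220966746824, -106704437547732)]);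
  (1, [::]);
  (3781325276264448000, [:: (-253853246291213250, -2355092995956119100); (33731251620323400, 49330845247701105); (-33272667306422500, -48566263256923170); (8331550188868125, 13252403570807745); (78973841758244, 123000212668932); (246788995410947, 464139236220756); (107171849700, 157018049475); (-213702060320829, -363257141781492)]);
  (1, [::]);
  (3781325276264448000, [:: (-2659420150733412000, 853059728476464300); (18583881287596350, 33811013440260210); (-11649750062677100, -34336416498616540); (2015676224241975, 3458387483677440); (6072619775128, 12234099124784); (81243220968004, 109340223379442); (15141333450, 75835732350); (-51555490281708, -101654220800334)]);
  (1, [::]);
  (7562650552528896000, [:: (3450345065679906900, 1321362561963381300); (-44831255900421870, -84038016082760190); (33302150304974980, 85477663281526560); (-10009130985057780, -16531961928685785); (-90566912724824, -153507224494392); (-322451710127282, -565308188935146); (-117176554050, -234869343150); (245082291236694, 474058110977982)]);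
  (1, [::]);
  (7562650552528896000, [:: (-670271874799269600, -329885335451687400); (9193437246769380, 20296357093803120); (-8762941504580120, -19414484616035080); (2483569030165695, 3978824063841630); (24697250869024, 37751656240352); (99747370714792, 123728251193756); (29381831100, 55891435800); (-70220966746824, -106704437547732)]);
  (1, [::]); (1, [::]); (1, [::]); (1, [::]); (1, [::]); (1, [::]); (1, [::]); (1, [::]);
  (1, [::]); (1, [::]); (1, [::]); (1, [::]); (1, [::]); (1, [::]); (1, [::]); (1, [::]);
  (7562650552528896000, [:: (3450345065679906900, 1321362561963381300); (-44831255900421870, -84038016082760190); (33302150304974980, 85477663281526560); (-10009130985057780, -16531961928685785); (-90566912724824, -153507224494392); (-322451710127282, -565308188935146); (-117176554050, -234869343150); (245082291236694, 474058110977982)]);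
  (1, [::]);
  (199017119803392000, [:: (73503002791666800, 26408182020031350); (-1315537660425615, -2029953390853905); (1307779476228610, 1926017797368170); (-256397524389585, -383240736133245); (-2075853582428, -2536434412024); (-8507999953214, -12829587954667); (-2779335825, -5507837475); (6894316818258, 10260998145549)]);
  (1, [::]);
  (199017119803392000, [:: (73503002791666800, 26408182020031350); (-1315537660425615, -2029953390853905); (1307779476228610, 1926017797368170); (-256397524389585, -383240736133245); (-2075853582428, -2536434412024); (-8507999953214, -12829587954667); (-2779335825, -5507837475); (6894316818258, 10260998145549)]);
  (1, [::]);
  (3781325276264448000, [:: (-253853246291213250, -2355092995956119100); (33731251620323400, 49330845247701105); (-33272667306422500, -48566263256923170); (8331550188868125, 13252403570807745); (78973841758244, 123000212668932); (246788995410947, 464139236220756); (107171849700, 157018049475); (-213702060320829, -363257141781492)]);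
  (1, [::]);
  (1512530110505779200, [:: (141437984303242440, 197370074032864920); (-3896905612298622, -6580139331287346); (4003411726811728, 6366862178737104); (-937678426627833, -1492856625296619); (-8489352257792, -12911367263208); (-32146499491112, -49684878087792); (-11709641550, -19242324450); (25554116854464, 39931155727584)]);
  (1, [::]); (1, [::]); (1, [::]); (1, [::]); (1, [::]); (1, [::]); (1, [::]); (1, [::]);
  (1, [::]); (1, [::]);
  (1512530110505779200, [:: (17249657108981220, -27159812406555840); (482839652971434, 323139854998752); (-68401606648056, -534815646285668); (46457412118191, 104077915292448); (99959995752, 1160079415840); (-410266438626, 4714393116424); (1051036050, 1130309700); (49494677190, -3990281369784)]);
  (1, [::]);
  (3781325276264448000, [:: (-2659420150733412000, 853059728476464300); (18583881287596350, 33811013440260210); (-11649750062677100, -34336416498616540); (2015676224241975, 3458387483677440); (6072619775128, 12234099124784); (81243220968004, 109340223379442); (15141333450, 75835732350); (-51555490281708, -101654220800334)]);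
  (1, [::]);
  (199017119803392000, [:: (73503002791666800, 26408182020031350); (-1315537660425615, -2029953390853905); (1307779476228610, 1926017797368170); (-256397524389585, -383240736133245); (-2075853582428, -2536434412024); (-8507999953214, -12829587954667); (-2779335825, -5507837475); (6894316818258, 10260998145549)]);
  (1, [::]);
  (3781325276264448000, [:: (-2659420150733412000, 853059728476464300); (18583881287596350, 33811013440260210); (-11649750062677100, -34336416498616540); (2015676224241975, 3458387483677440); (6072619775128, 12234099124784); (81243220968004, 109340223379442); (15141333450, 75835732350); (-51555490281708, -101654220800334)]);
  (1, [::]);
  (79606847921356800, [:: (-3239007019730460, -667528643629980); (17065818970728, 68634677700864); (-51080288956532, -50645452627616); (9682673736852, 12919607779401); (119543384200, 99039768688); (477147406978, 339447262018); (85603500, 184938000); (-346886149614, -273929925510)]);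
  (1, [::]); (1, [::]); (1, [::]); (1, [::]); (1, [::]); (1, [::]); (1, [::]); (1, [::]);
  (79606847921356800, [:: (-3239007019730460, -667528643629980); (17065818970728, 68634677700864); (-51080288956532, -50645452627616); (9682673736852, 12919607779401); (119543384200, 99039768688); (477147406978, 339447262018); (85603500, 184938000); (-346886149614, -273929925510)]);
  (1, [::]);
  (3781325276264448000, [:: (-253853246291213250, -2355092995956119100); (33731251620323400, 49330845247701105); (-33272667306422500, -48566263256923170); (8331550188868125, 13252403570807745); (78973841758244, 123000212668932); (246788995410947, 464139236220756); (107171849700, 157018049475); (-213702060320829, -363257141781492)]);
  (1, [::]);
  (7562650552528896000, [:: (3450345065679906900, 1321362561963381300); (-44831255900421870, -84038016082760190); (33302150304974980, 85477663281526560); (-10009130985057780, -16531961928685785); (-90566912724824, -153507224494392); (-322451710127282, -565308188935146); (-117176554050, -234869343150); (245082291236694, 474058110977982)]);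
  (1, [::]);
  (1512530110505779200, [:: (17249657108981220, -27159812406555840); (482839652971434, 323139854998752); (-68401606648056, -534815646285668); (46457412118191, 104077915292448); (99959995752, 1160079415840); (-410266438626, 4714393116424); (1051036050, 1130309700); (49494677190, -3990281369784)]);
  (1, [::]); (1, [::]); (1, [::]); (1, [::]); (1, [::]); (1, [::]);
  (1512530110505779200, [:: (141437984303242440, 197370074032864920); (-3896905612298622, -6580139331287346); (4003411726811728, 6366862178737104); (-937678426627833, -1492856625296619); (-8489352257792, -12911367263208); (-32146499491112, -49684878087792); (-11709641550, -19242324450); (25554116854464, 39931155727584)]);
  (1, [::]);
  (7562650552528896000, [:: (-670271874799269600, -329885335451687400); (9193437246769380, 20296357093803120); (-8762941504580120, -19414484616035080); (2483569030165695, 3978824063841630); (24697250869024, 37751656240352); (99747370714792, 123728251193756); (29381831100, 55891435800); (-70220966746824, -106704437547732)]);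
  (1, [::]); (1, [::]); (1, [::]); (1, [::]); (1, [::]); (1, [::]); (1, [::]); (1, [::]);
  (1, [::]); (1, [::]); (1, [::]); (1, [::])]%binZ.

Lemma cert4_valid : Q_divisible_cert 2 points4 quotients4 cert4 && Q_multiple_cert quotients4.
Proof. by vm_compute. Qed.

Lemma cert8_valid : Q_divisible_cert 6 points8 quotients8 cert8.
Proof. by vm_compute. Qed.

Lemma cert14_valid : Q_divisible_cert 12 points14 quotients14 cert14.
Proof. by vm_compute. Qed.

Section Consequences.
Variable R : realType.
Local Notation C := R[i].

Lemma homog_nonconstant (F : {mpoly C[3]}) d :
  F != 0 -> F \is d.-homog -> (0 < d)%N -> nonconstant F.
Proof.
move=> F0 F_homog d_gt0; have /(dhomog_uniq F0 F_homog) d_eq := dhomog_msize F_homog.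
by rewrite /nonconstant -(prednK (_ : 0 < msize F)%N) ?lt0n ?msize_poly_eq0 // -d_eq.
Qed.

Lemma Qform_nonconstant : nonconstant (Qform : {mpoly C[3]}).
Proof. exact: homog_nonconstant (Qform_neq0 _) (Qform_homog _) isT. Qed.

Lemma Q_divisible_cert_reducible d pts Ls cs (F : {mpoly C[3]}) :
  ~~ odd d -> (0 < d)%N -> Q_divisible_cert d pts Ls cs -> in_ico_system d.+2 F -> reducible F.
Proof.
move=> d_even d_gt0 cert [F0 [F_homog F_inv]].
have [FZ FT FP] := ico_generators_invariant F0 F_inv.
have F_QG := Q_divisible_cert_sound d_even F_homog FZ FT FP cert.
set G := poly3 _ _ in F_QG.
have G0 : G != 0 by apply: contraNneq F0 => G0; rewrite F_QG G0 mulr0.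
exists Qform, G; split; first exact: Qform_nonconstant.
by split=> //; apply: homog_nonconstant G0 (poly3_homog _ _) d_gt0.
Qed.

Lemma ico_quartic_nonreduced (F : {mpoly C[3]}) : in_ico_system 4 F -> nonreduced F.
Proof.
move=> [F0 [F_homog F_inv]]; have [FZ FT FP] := ico_generators_invariant F0 F_inv.
have /andP[cert_div cert_mul] := cert4_valid.
have F_QG := Q_divisible_cert_sound (isT : ~~ odd 2) F_homog FZ FT FP cert_div.
rewrite (Q_multiple_cert_sound _ cert_mul) mulrA in F_QG.
by exists Qform; eexists; split; [exact: Qform_nonconstant | exact: F_QG].
Qed.
End Consequences.

Theorem mainTheorem17 (R : realType) :
  (forall F : {mpoly R[i][3]}, in_ico_system 4 F -> nonreduced F) /\
  (forall (d : nat) (F : {mpoly R[i][3]}), (d = 8 \/ d = 14)%N ->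
     in_ico_system d F -> reducible F \/ nonreduced F).
Proof.
split=> [|d F [->|->] F_inv]; first exact: ico_quartic_nonreduced.
  by left; apply: Q_divisible_cert_reducible F_inv; [| |exact: cert8_valid].
by left; apply: Q_divisible_cert_reducible F_inv; [| |exact: cert14_valid].
Qed.
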